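(* Let $(M,d)$ be a complete pointed metric space and let $\mu,\nu$ be positive Radon measures on $\beta\widetilde{M}$ such that $\mu\preccurlyeq\nu$ and $\nu$ is concentrated on $\mathcal{R}$. Then $p_i(\operatorname{supp}\mu)\subset p_i(\operatorname{supp}\nu)$ for $i=1,2$.
   Context: $\widetilde{M}=\{(x,y)\in M\times M:x\ne y\}$, $\beta\widetilde{M}$ its Stone–Čech compactification; Radon measures identified with $C(\beta\widetilde{M})^*$; $\operatorname{supp}$ denotes the closed support of a measure. $M^u$ is the uniform (Samuel) compactification of $M$; $p_1,p_2:\beta\widetilde{M}\to M^u$ continuously extend the coordinate projections, $p=(p_1,p_2)$. $\mathcal{R}(M)=\{\xi\in M^u:\overline{d_0}(\xi)<\infty\}$, where $\overline{d_0}:M^u\to[0,\infty]$ continuously extends $x\mapsto d(x,0)$ ($0$ the base point), and $\mathcal{R}=p^{-1}(\mathcal{R}(M)\times\mathcal{R}(M))$. $G$ is the set of $g\in C(\beta\widetilde{M})$ with $d(x,y)g(x,y)\le d(x,u)g(x,u)+d(u,y)g(u,y)$ for all distinct $x,u,y\in M$; $\mu\preccurlyeq\nu$ iff $\int g\,d\mu\le\int g\,d\nu$ for all $g\in G$. Throughout, $M$ has at least three distinct points. *)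

From HB Require Import structures.
From mathcomp Require Import all_boot all_order all_algebra.
From mathcomp Require Import all_classical all_reals all_analysis.
Set Implicit Arguments. Unset Strict Implicit. Unset Printing Implicit Defensive.
Import Order.TTheory GRing.Theory Num.Theory.
Import numFieldNormedType.Exports.
Local Open Scope classical_set_scope.
Local Open Scope ring_scope.

Definition is_metric {R : realType} {M : Type} (d : M -> M -> R) : Prop :=
  (forall x y, 0 <= d x y) /\ (forall x y, d x y = 0 <-> x = y) /\
  (forall x y, d x y = d y x) /\ (forall x y z, d x z <= d x y + d y z).

Definition metric_cauchy {R : realType} {M : Type} (d : M -> M -> R)
  (u : nat -> M) : Prop :=
  forall e : R, 0 < e -> exists N : nat, forall m n : nat,
    (N <= m)%N -> (N <= n)%N -> d (u m) (u n) < e.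

Definition metric_complete {R : realType} {M : Type} (d : M -> M -> R) : Prop :=
  forall u : nat -> M, metric_cauchy d u ->
    exists l : M, forall e : R, 0 < e -> exists N : nat, forall n : nat,
      (N <= n)%N -> d (u n) l < e.

Definition Mtilde (M : Type) := {z : M * M | z.1 <> z.2}.

Definition dtilde {R : realType} {M : Type} (d : M -> M -> R)
  (z w : Mtilde M) : R :=
  Num.max (d (sval z).1 (sval w).1) (d (sval z).2 (sval w).2).

Definition cont_on_Mtilde {R : realType} {M : Type} (d : M -> M -> R)
  {T : topologicalType} (f : Mtilde M -> T) : Prop :=
  forall (z : Mtilde M) (U : set T), open U -> U (f z) ->
    exists2 delta : R, 0 < delta &
      forall w : Mtilde M, dtilde d z w < delta -> U (f w).

Definition cont_on_M {R : realType} {M : Type} (d : M -> M -> R)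
  {T : topologicalType} (f : M -> T) : Prop :=
  forall (x : M) (U : set T), open U -> U (f x) ->
    exists2 delta : R, 0 < delta &
      forall y : M, d x y < delta -> U (f y).

Definition bounded_fun {R : realType} {X : Type} (f : X -> R) : Prop :=
  exists C : R, forall x, `|f x| <= C.

Definition unif_cont {R : realType} {M : Type} (d : M -> M -> R)
  (f : M -> R) : Prop :=
  forall e : R, 0 < e -> exists2 delta : R, 0 < delta &
    forall x y : M, d x y < delta -> `|f x - f y| < e.

Definition is_stone_cech {R : realType} {M : Type} (d : M -> M -> R)
  (K : ptopologicalType) (iota : Mtilde M -> K) : Prop :=
  [/\ compact [set: K], hausdorff_space K, cont_on_Mtilde d iota,
      closure (range iota) = [set: K] &
      forall f : Mtilde M -> R, bounded_fun f -> cont_on_Mtilde d f ->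
        exists F : K -> R, continuous F /\ (forall z, F (iota z) = f z)].

Definition is_samuel {R : realType} {M : Type} (d : M -> M -> R)
  (Ku : topologicalType) (j : M -> Ku) : Prop :=
  [/\ compact [set: Ku], hausdorff_space Ku, cont_on_M d j,
      closure (range j) = [set: Ku] &
      forall f : M -> R, (bounded_fun f /\ unif_cont d f) <->
        exists F : Ku -> R, continuous F /\ (forall x, F (j x) = f x)].

Notation BorelT K := (g_sigma_algebraType (@open K)).

Definition radon {R : realType} {K : ptopologicalType}
  (mu : {measure set (BorelT K) -> \bar R}) : Prop :=
  (mu [set: BorelT K] < +oo)%E /\
  forall A : set (BorelT K), measurable A ->
    mu A = ereal_sup [set mu C | C in [set C : set (BorelT K) |
                                        compact (C : set K) /\ C `<=` A]].

Definition supp {R : realType} {K : ptopologicalType}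
  (mu : {measure set (BorelT K) -> \bar R}) : set K :=
  [set xi : K | forall U : set K, open U -> U xi -> (0 < mu U)%E].

Definition Gset {R : realType} {M : Type} (d : M -> M -> R)
  {K : ptopologicalType} (iota : Mtilde M -> K) : set (K -> R) :=
  [set g | continuous g /\
    forall (x u y : M) (hxy : x <> y) (hxu : x <> u) (huy : u <> y),
      d x y * g (iota (exist _ (x, y) hxy)) <=
      d x u * g (iota (exist _ (x, u) hxu)) +
      d u y * g (iota (exist _ (u, y) huy))].

Definition Gle {R : realType} {M : Type} (d : M -> M -> R)
  {K : ptopologicalType} (iota : Mtilde M -> K)
  (mu nu : {measure set (BorelT K) -> \bar R}) : Prop :=
  forall g, Gset d iota g ->
    (\int[mu]_x (g x)%:E <= \int[nu]_x (g x)%:E)%E.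

(* the set script-R = p^{-1}(R(M) x R(M)) *)
Definition Rset {R : realType} {K : ptopologicalType} {Ku : topologicalType}
  (d0bar : Ku -> \bar R) (p1 p2 : K -> Ku) : set K :=
  [set t | (d0bar (p1 t) < +oo)%E /\ (d0bar (p2 t) < +oo)%E].

From HB Require Import structures.
From mathcomp Require Import all_boot all_order all_algebra.
From mathcomp Require Import all_classical all_reals all_analysis.
From mathcomp Require Import measurable_realfun.
From mathcomp Require Import ring lra.
Import Order.TTheory GRing.Theory Num.Theory.
Import numFieldNormedType.Exports.
Local Open Scope classical_set_scope.
Local Open Scope ring_scope.

(* For nonnegative 1-Lipschitz phi, psi the function
   (x, y) |-> min (phi x + psi y, d x y) / d x y  is continuous on M~ with
   values in [0, 1], and min (phi x + psi y, d x y) satisfies the triangle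
   inequality, so its extension g to the compactification lies in G.
   With phi = psi = (d(., 0) - n)^+ one gets g >= 1/2 off R and g = 0 where
   both projections have d0 < n, hence mu(~R)/2 <= nu({d0 >= n}) -> nu(~R) = 0.
   If p_i t lay outside the compact set p_i(supp nu) for some t in supp mu,
   an Urysohn function F on M^u separates them; F o j is uniformly
   continuous, so a truncated distance theta to {F o j < 1/3} put in the i-th
   slot gives a g in G that vanishes near supp nu (so its nu-integral is 0)
   but is bounded below on the part of {F o p_i > 2/3} where d0 is bounded,
   a set of positive mu-measure because mu is also concentrated on R. *)

Lemma ratio_dist_le {F : realFieldType} {a b a' b' e : F} :
  0 < b -> 0 < b' -> 0 <= a' <= b' -> `|a - a'| <= e -> `|b - b'| <= e ->
  `|a / b - a' / b'| <= 2 * e / b.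
Proof.
move=> b0 b'0 /andP[a'0 a'b'] aa' bb'.
have r0 : 0 <= a' / b' by rewrite divr_ge0 // ltW.
have r1 : a' / b' <= 1 by rewrite ler_pdivrMr // mul1r.
have -> : a / b - a' / b' = ((a - a') + a' / b' * (b' - b)) / b.
  by field; rewrite ?gt_eqF.
rewrite normrM normfV (gtr0_norm b0) ler_pM2r ?invr_gt0 //.
rewrite (le_trans (ler_normD _ _)) // normrM ger0_norm // (distrC b').
have : a' / b' * `|b - b'| <= `|b - b'| by rewrite ler_piMl.
lra.
Qed.

Section MetricSpace.
Context {R : realType} {M : Type} (d : M -> M -> R).
Hypothesis dm : is_metric d.

Lemma metric_ge0 x y : 0 <= d x y. Proof. by case: dm. Qed.
Lemma metric_sym x y : d x y = d y x. Proof. by case: dm => _ [_ []]. Qed.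
Lemma metric_triangle x y z : d x z <= d x y + d y z.
Proof. by case: dm => _ [_ [_]]. Qed.
Lemma metric_xx x : d x x = 0. Proof. by case: dm => _ [/(_ x x) [_ ->]]. Qed.

Lemma metric_gt0 {x y} : x <> y -> 0 < d x y.
Proof.
move=> xy; rewrite lt_neqAle metric_ge0 andbT; apply/eqP => dxy.
by case: dm => _ [/(_ x y) [/(_ (esym dxy))]].
Qed.

Lemma metric_lipschitz x y x' y' : `|d x y - d x' y'| <= d x x' + d y y'.
Proof.
have := metric_triangle x x' y; have := metric_triangle x' y' y.
have := metric_triangle x' x y'; have := metric_triangle x y y'.
rewrite (metric_sym x' x) (metric_sym y' y) ler_norml; lra.
Qed.

Definition lipschitz1 (phi : M -> R) := forall x u, phi x <= phi u + d x u.

Definition capped_sum (phi psi : M -> R) x y := Num.min (phi x + psi y) (d x y).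

Definition capped_ratio (phi psi : M -> R) (z : Mtilde M) :=
  capped_sum phi psi (sval z).1 (sval z).2 / d (sval z).1 (sval z).2.

Section CappedRatio.
Variables phi psi : M -> R.
Hypotheses (phi_ge0 : forall x, 0 <= phi x) (psi_ge0 : forall x, 0 <= psi x).
Hypotheses (phi_lip : lipschitz1 phi) (psi_lip : lipschitz1 psi).

Lemma capped_sum_triangle x u y :
  capped_sum phi psi x y <= capped_sum phi psi x u + capped_sum phi psi u y.
Proof.
rewrite /capped_sum.
have := phi_ge0 u; have := psi_ge0 u; have := phi_lip x u; have := psi_lip y u.
have := metric_triangle x u y; rewrite (metric_sym y u).
case: (leP (phi x + psi y) (d x y)); case: (leP (phi x + psi u) (d x u));
  case: (leP (phi u + psi y) (d u y)); lra.
Qed.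

Lemma capped_sum_lipschitz x y x' y' :
  `|capped_sum phi psi x y - capped_sum phi psi x' y'| <= d x x' + d y y'.
Proof.
have := metric_lipschitz x y x' y'; rewrite /capped_sum !ler_norml.
have := phi_lip x x'; have := phi_lip x' x.
have := psi_lip y y'; have := psi_lip y' y.
rewrite (metric_sym x' x) (metric_sym y' y).
by case: (leP (phi x + psi y) (d x y)); case: (leP (phi x' + psi y') (d x' y'));
  move=> ? ? ? ? ? ? /andP[? ?]; apply/andP; split; lra.
Qed.

Lemma capped_ratio_ge0 z : 0 <= capped_ratio phi psi z.
Proof.
by rewrite divr_ge0 ?metric_ge0 // le_min addr_ge0 ?metric_ge0.
Qed.

Lemma capped_ratio_le1 z : capped_ratio phi psi z <= 1.
Proof.
case: z => -[x y] /= xy.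
by rewrite /capped_ratio ler_pdivrMr ?metric_gt0 // mul1r ge_min lexx orbT.
Qed.

Lemma mul_capped_ratio x y (xy : x <> y) :
  d x y * capped_ratio phi psi (exist _ (x, y) xy) = capped_sum phi psi x y.
Proof. by rewrite /capped_ratio /= mulrC divfK // gt_eqF // metric_gt0. Qed.

Lemma capped_ratio_eq0 z : phi (sval z).1 + psi (sval z).2 = 0 ->
  capped_ratio phi psi z = 0.
Proof.
by move=> h; rewrite /capped_ratio /capped_sum h (min_idPl (metric_ge0 _ _)) mul0r.
Qed.

Lemma capped_ratio_ge z a D : 0 <= a -> 0 < D ->
  a <= phi (sval z).1 + psi (sval z).2 -> d (sval z).1 (sval z).2 <= D ->
  Num.min (a / D) 1 <= capped_ratio phi psi z.
Proof.
case: z => -[x y] /= xy a0 D0 a_le d_le; have dxy0 := metric_gt0 xy.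
rewrite /capped_ratio /capped_sum /=.
case: (leP (phi x + psi y) (d x y)) => [F_le|F_gt]; rewrite ge_min; apply/orP.
  left; apply: ler_pM => //; first by rewrite invr_ge0 ltW.
  by rewrite lef_pV2 ?posrE.
by right; rewrite divff ?gt_eqF.
Qed.

Lemma continuous_capped_ratio : cont_on_Mtilde d (capped_ratio phi psi).
Proof.
move=> z U oU Uz.
have /nbhs_ballP[e /= e0 eU] : nbhs (capped_ratio phi psi z) U.
  exact: open_nbhs_nbhs.
case: z eU {Uz} => -[x y] /= xy eU; have dxy0 := metric_gt0 xy.
exists (e * d x y / 4); first by rewrite divr_gt0 ?mulr_gt0.
case=> -[x' y'] /= xy'; rewrite /dtilde /= gt_max => /andP[hx hy].
apply: eU; rewrite /ball /= /capped_ratio /=.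
apply: (le_lt_trans (ratio_dist_le _ _ _ (capped_sum_lipschitz x y x' y')
  (metric_lipschitz x y x' y'))) => //; first exact: metric_gt0.
- by rewrite le_min addr_ge0 ?metric_ge0 //= ge_min lexx orbT.
- by rewrite ltr_pdivrMr //; lra.
Qed.

End CappedRatio.

Section TruncatedDistance.
Variables (eta : R) (A : set M).
Hypothesis eta_ge0 : 0 <= eta.

Definition trunc_dist x := inf ([set eta] `|` [set d x a | a in A]).

Let trunc_dist_lbound x : lbound ([set eta] `|` [set d x a | a in A]) 0.
Proof. by move=> _ [->|[a _ <-]] //; exact: metric_ge0. Qed.

Let trunc_dist_le x e :
  ([set eta] `|` [set d x a | a in A]) e -> trunc_dist x <= e.
Proof. by apply: ge_inf; exists 0; exact: trunc_dist_lbound. Qed.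

Lemma trunc_dist_ge0 x : 0 <= trunc_dist x.
Proof. by apply: lb_le_inf; [exists eta; left|exact: trunc_dist_lbound]. Qed.

Lemma trunc_dist_eq0 x : A x -> trunc_dist x = 0.
Proof.
move=> Ax; apply/eqP; rewrite eq_le trunc_dist_ge0 andbT -(metric_xx x).
by apply: trunc_dist_le; right; exists x.
Qed.

Lemma trunc_dist_far x : (forall a, A a -> eta <= d x a) -> eta <= trunc_dist x.
Proof.
by move=> far; apply: lb_le_inf => [|_ [->|[a /far ? <-]]] //; exists eta; left.
Qed.

Lemma trunc_dist_lipschitz1 : lipschitz1 trunc_dist.
Proof.
move=> x u; rewrite -lerBlDr; apply: lb_le_inf => [|_ [->|[a Aa <-]]].
- by exists eta; left.
- have := trunc_dist_le x eta (or_introl erefl); have := metric_ge0 x u; lra.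
- have := trunc_dist_le x (d x a) (or_intror (ex_intro2 _ _ a Aa erefl)).
  have := metric_triangle x u a; lra.
Qed.

End TruncatedDistance.

Section Excess.
Variables (x0 : M) (c : R).

Definition excess x := Num.max 0 (d x x0 - c).

Lemma excess_ge0 x : 0 <= excess x. Proof. by rewrite le_max lexx. Qed.

Lemma excess_eq0 x : d x x0 <= c -> excess x = 0.
Proof. by move=> le_c; apply/max_idPl; rewrite subr_le0. Qed.

Lemma excess_lipschitz1 : lipschitz1 excess.
Proof.
move=> x u; have := metric_triangle x u x0; have := metric_ge0 x u.
have := excess_ge0 u; have : d u x0 - c <= excess u by rewrite le_max lexx orbT.
by rewrite ge_max => ? ? ? ?; apply/andP; split; lra.
Qed.

Lemma capped_ratio_excess_ge z : 0 <= c ->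
  3 * c < d (sval z).1 x0 \/ 3 * c < d (sval z).2 x0 ->
  2^-1 <= capped_ratio excess excess z.
Proof.
case: z => -[x y] /= xy c0 far.
rewrite /capped_ratio ler_pdivlMr ?metric_gt0 // /capped_sum /= le_min.
have : d x x0 - c <= excess x by rewrite le_max lexx orbT.
have : d y x0 - c <= excess y by rewrite le_max lexx orbT.
have := excess_ge0 x; have := excess_ge0 y.
have := metric_triangle x x0 y; rewrite (metric_sym x0 y).
have := metric_ge0 x x0; have := metric_ge0 y x0; have := metric_ge0 x y.
by case: far => ? *; apply/andP; split; lra.
Qed.

End Excess.

End MetricSpace.

Lemma dense_range_closed {T : Type} {K S : topologicalType} {iota : T -> K}
    {f : K -> S} {O : set K} {C : set S} :
  closure (range iota) = [set: K] -> continuous f -> open O -> closed C ->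
  (forall z, O (iota z) -> C (f (iota z))) -> forall s, O s -> C (f s).
Proof.
move=> dense cf oO cC fC s Os; apply: contrapT => nCs.
have : closure (range iota) s by rewrite dense.
move=> /(_ (O `&` f @^-1` (~` C))) [].
  apply: open_nbhs_nbhs; split => //; apply: openI => //.
  by apply: open_comp => [? _|]; [exact: cf|exact: closed_openC].
by move=> _ [[z _ <-] [/fC]].
Qed.

Lemma urysohn_point {R : realType} {T : topologicalType} (C : set T) (u : T) :
  hausdorff_space T -> compact [set: T] -> closed C -> ~ C u ->
  exists F : T -> R, [/\ continuous F, forall s, C s -> F s = 0 & F u = 1].
Proof.
move=> hT cT cC Cu.
have cu : closed [set u] := @accessible_closed_set1 _ (hausdorff_accessible hT) u.
have /(@uniform_separatorP T R)[F [cF _ F0 F1]] : uniform_separator C [set u].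
  apply: ((@normal_separatorP R T).1 (compact_normal hT cT)) => //.
  by apply/seteqP; split => // s [Cs /= su]; apply: Cu; rewrite -su.
by exists F; split => [|s Cs|]; [exact: cF|apply: F0; exists s|apply: F1; exists u].
Qed.

Section BorelMeasure.
Context {R : realType} {K : ptopologicalType}.
Implicit Types (mu : {measure set (BorelT K) -> \bar R}) (A O : set K).

Lemma open_measurable_Borel {O} : open O -> measurable (O : set (BorelT K)).
Proof. exact: sub_gen_smallest. Qed.

Lemma measurable_EFin_continuous (g : K -> R) :
  continuous g -> measurable_fun setT (fun x : BorelT K => (g x)%:E).
Proof.
move=> cg; apply/measurable_EFinP.
apply: (measurability _ (RGenOpens.measurableE R)) => _ [_ [a [b ->] <-]].
rewrite setTI; apply: open_measurable_Borel; apply: open_comp.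
  by move=> *; exact: cg.
exact: interval_open.
Qed.

Lemma integral_le_measure mu (g : K -> R) A :
  continuous g -> measurable (A : set (BorelT K)) ->
  (forall x, 0 <= g x <= 1) -> (forall x, ~ A x -> g x = 0) ->
  (\int[mu]_x (g x)%:E <= mu A)%E.
Proof.
move=> cg mA g01 gA.
rewrite (_ : mu A = \int[mu]_x (\1_A x)%:E)%E;
  last by rewrite integral_indic ?setIT.
apply: ge0_le_integral => //.
- by move=> x _; rewrite lee_fin; case/andP: (g01 x).
- exact: measurable_EFin_continuous.
- by apply/measurable_EFinP; exact: measurable_indic.
- move=> x _; rewrite lee_fin indicE; have [Ax|nAx] := pselect (A x).
    by rewrite mem_set //; case/andP: (g01 x).
  by rewrite memNset // gA.
Qed.

Lemma measure_le_integral mu (g : K -> R) A (c : R) :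
  continuous g -> measurable (A : set (BorelT K)) -> 0 <= c ->
  (forall x, 0 <= g x) -> (forall x, A x -> c <= g x) ->
  (c%:E * mu A <= \int[mu]_x (g x)%:E)%E.
Proof.
move=> cg mA c0 g0 gA.
rewrite (_ : mu A = \int[mu]_x (\1_A x)%:E)%E;
  last by rewrite integral_indic ?setIT.
rewrite -(@integralZl_indic _ _ _ mu setT measurableT (fun _ => A) c) //;
  last by rewrite ltNge c0.
apply: ge0_le_integral => //.
- by move=> x _; rewrite lee_fin mulr_ge0.
- apply/measurable_EFinP; apply: measurable_funM => //; exact: measurable_indic.
- exact: measurable_EFin_continuous.
- move=> x _; rewrite lee_fin indicE; have [Ax|nAx] := pselect (A x).
    by rewrite mem_set // mulr1; apply: gA.
  by rewrite memNset // mulr0.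
Qed.

Lemma nsupp_null_nbhs mu s : ~ supp mu s ->
  exists U : set K, [/\ open U, U s & mu U = 0%E].
Proof.
move=> /existsNP[U /not_implyP[oU /not_implyP[Us /negP]]].
by rewrite lt0e measure_ge0 andbT negbK => /eqP mU0; exists U.
Qed.

Lemma supp_closed mu : closed (supp mu).
Proof.
rewrite -openC openE => s /nsupp_null_nbhs[U [oU Us mU0]].
apply: filterS (open_nbhs_nbhs (conj oU Us)) => s' Us' /(_ U oU Us').
by rewrite mU0 ltxx.
Qed.

Lemma compact_locally_null mu C : compact C -> measurable (C : set (BorelT K)) ->
  (forall s, C s -> exists U : set K, [/\ open U, U s & mu U = 0%E]) ->
  mu C = 0%E.
Proof.
move=> cC mC locnull.
have /choice[U hU] : forall s, exists U : set K,
    C s -> [/\ open U, U s & mu U = 0%E].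
  by move=> s; have [/locnull[U ?]|] := pselect (C s); [exists U|exists set0].
have ccov : cover_compact C by rewrite -compact_cover.
have [|s Cs|D' D'C CD'] := ccov K C U.
- by move=> s /hU[].
- by exists s => //; have [] := hU s Cs.
apply/eqP; rewrite eq_le measure_ge0 andbT.
apply: le_trans (content_sub_fsum _ (finite_fset D') _ mC CD') _.
  move=> s /D'C/set_mem/hU[oU _ _]; exact: open_measurable_Borel.
by rewrite fsbig1 // => s /D'C/set_mem/hU[].
Qed.

Lemma measure_setC_supp_nbhs mu O : compact [set: K] -> open O ->
  supp mu `<=` O -> mu (~` O) = 0%E.
Proof.
move=> cK oO suppO; apply: compact_locally_null.
- exact: subclosed_compact (open_closedC oO) cK (subsetT _).
- by apply: measurableC; exact: open_measurable_Borel.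
- by move=> s nOs; apply: nsupp_null_nbhs => /suppO.
Qed.

End BorelMeasure.

Lemma ereal_lt_natS {R : realType} (v : \bar R) :
  (v < +oo)%E -> exists n : nat, (v < n.+1%:R%:E)%E.
Proof.
case: v => [r _|//|_]; last by exists 0%N; rewrite ltNye.
by exists (Num.truncn r); rewrite lte_fin truncnS_gt.
Qed.

Definition coord {M : Type} (b : bool) (z : Mtilde M) : M :=
  if b then (sval z).1 else (sval z).2.

Section SupportProjections.
Context {R : realType} {M : Type} {d : M -> M -> R} {x0 : M}
  {K : ptopologicalType} {iota : Mtilde M -> K}
  {Ku : topologicalType} {j : M -> Ku}
  {p1 p2 : K -> Ku} {d0bar : Ku -> \bar R}
  {mu nu : {measure set (BorelT K) -> \bar R}}.
Hypotheses (dm : is_metric d) (sc : is_stone_cech d iota) (sa : is_samuel d j).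
Hypotheses (cp1 : continuous p1) (hp1 : forall z, p1 (iota z) = j (sval z).1).
Hypotheses (cp2 : continuous p2) (hp2 : forall z, p2 (iota z) = j (sval z).2).
Hypotheses (cd0 : continuous d0bar) (hd0 : forall x, d0bar (j x) = (d x x0)%:E).
Hypotheses (nu_fin : (nu [set: BorelT K] < +oo)%E) (mu_le_nu : Gle d iota mu nu).
Hypothesis nu_R : nu (~` Rset d0bar p1 p2) = 0%E.

Let dense_iota : closure (range iota) = [set: K]. Proof. by case: sc. Qed.

Lemma Gset_capped_ratio {phi psi : M -> R} :
  (forall x, 0 <= phi x) -> (forall x, 0 <= psi x) ->
  lipschitz1 d phi -> lipschitz1 d psi ->
  exists g : K -> R, [/\ continuous g, Gset d iota g,
    forall z, g (iota z) = capped_ratio d phi psi z & forall s, 0 <= g s <= 1].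
Proof.
move=> phi0 psi0 phi_lip psi_lip.
have [_ _ _ _ /(_ (capped_ratio d phi psi))[]] := sc.
- exists 1 => z; rewrite ger0_norm ?capped_ratio_le1 ?capped_ratio_ge0 //.
- exact: continuous_capped_ratio.
move=> g [cg gE]; exists g; split => //.
- split => // x u y xy xu uy; rewrite !gE !mul_capped_ratio //.
  exact: capped_sum_triangle.
- move=> s; have := dense_range_closed dense_iota cg openT (@itv_closed _ R 0 1).
  apply=> // z _; rewrite gE /= in_itv /=.
  by rewrite capped_ratio_ge0 ?capped_ratio_le1.
Qed.

Definition Rbelow (v : \bar R) : set K :=
  [set s | (d0bar (p1 s) < v)%E /\ (d0bar (p2 s) < v)%E].

Let open_d0bar_comp {p : K -> Ku} {V : set (\bar R)} :
  continuous p -> open V -> open ((d0bar \o p) @^-1` V).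
Proof.
by move=> cp oV; apply: open_comp => // s _; exact: continuous_comp (cp s) (cd0 _).
Qed.

Lemma open_Rbelow v : open (Rbelow v).
Proof.
have := openI (open_d0bar_comp cp1 (@open_ereal_lt_ereal R v))
  (open_d0bar_comp cp2 (@open_ereal_lt_ereal R v)).
by [].
Qed.

Let measurable_Rbelow v : measurable (Rbelow v : set (BorelT K)).
Proof. exact: open_measurable_Borel (open_Rbelow v). Qed.

Let measurable_RbelowC v : measurable (~` Rbelow v : set (BorelT K)).
Proof. by apply: measurableC; exact: measurable_Rbelow. Qed.

Lemma Rbelow_le v w : (v <= w)%E -> Rbelow v `<=` Rbelow w.
Proof. by move=> vw s [s1 s2]; split; exact: lt_le_trans vw. Qed.

Lemma Rset_bigcup : Rset d0bar p1 p2 = \bigcup_n Rbelow n.+1%:R%:E.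
Proof.
apply/seteqP; split => [s [/ereal_lt_natS[a s1] /ereal_lt_natS[b s2]]|s [n _]].
  exists (maxn a b) => //; split.
  - by apply: lt_le_trans s1 _; rewrite lee_fin ler_nat ltnS leq_maxl.
  - by apply: lt_le_trans s2 _; rewrite lee_fin ler_nat ltnS leq_maxr.
by apply: Rbelow_le; rewrite leey.
Qed.

Lemma half_measure_setC_Rset_le n :
  ((2^-1)%:E * mu (~` Rset d0bar p1 p2) <= nu (~` Rbelow n.+1%:R%:E))%E.
Proof.
set c : R := n.+1%:R.
have [g [cg Gg gE g01]] := Gset_capped_ratio (excess_ge0 d x0 c)
  (excess_ge0 d x0 c) (excess_lipschitz1 d dm x0 c) (excess_lipschitz1 d dm x0 c).
have g0 s : 0 <= g s by case/andP: (g01 s).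
apply: (le_trans _ (le_trans (mu_le_nu _ Gg) _)).
  apply: measure_le_integral => //; first exact: measurable_RbelowC.
  pose far (p : K -> Ku) := (d0bar \o p) @^-1` [set w | ((3 * c)%:E < w)%E].
  have oO : open (far p1 `|` far p2).
    by apply: openU; apply: open_d0bar_comp => //; exact: open_ereal_gt_ereal.
  move=> s nRs.
  apply: (dense_range_closed dense_iota cg oO (@closed_ge R 2^-1) _ s) => [z|].
    rewrite /far /= hp1 hp2 !hd0 !lte_fin gE; exact: capped_ratio_excess_ge.
  move/not_andP: nRs => [] /negP; rewrite -leNgt leye_eq => /eqP s_oo;
    [left|right]; rewrite /far /= s_oo; exact: ltry.
apply: integral_le_measure => // s /contrapT.
move: s; apply: (dense_range_closed dense_iota cg (open_Rbelow _)
  (@closed_eq R 0)).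
move=> z []; rewrite hp1 hp2 !hd0 !lte_fin gE => /ltW x_le /ltW y_le /=.
by apply: capped_ratio_eq0 => //; rewrite !excess_eq0 ?addr0.
Qed.

Lemma mu_setC_Rset0 : mu (~` Rset d0bar p1 p2) = 0%E.
Proof.
pose F n := ~` Rbelow n.+1%:R%:E.
have F_cap : \bigcap_n F n = ~` Rset d0bar p1 p2.
  by rewrite Rset_bigcup setC_bigcup.
have F_nonincr : {homo F : m n / (m <= n)%N >-> (n <= m)%O}.
  by move=> m n mn; apply/subsetPset/subsetC/Rbelow_le; rewrite lee_fin ler_nat.
have nuF0 : (nu (F 0%N) < +oo)%E.
  apply: (le_lt_trans _ nu_fin); apply: le_measure; rewrite ?inE //.
  exact: measurable_RbelowC.
have := nonincreasing_cvg_mu nuF0 (fun n => measurable_RbelowC _) _ F_nonincr.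
rewrite F_cap nu_R => /(_ (measurable_RbelowC +oo)) cvg0.
have : ((2^-1)%:E * mu (~` Rset d0bar p1 p2) <= 0)%E.
  rewrite -(cvg_lim (@ereal_hausdorff _) cvg0).
  by apply: lime_ge; [exact: cvgP cvg0|exact: nearW half_measure_setC_Rset_le].
rewrite pmule_rle0 ?lte_fin ?invr_gt0 // => mu_le0.
by apply/eqP; rewrite eq_le mu_le0 measure_ge0.
Qed.

Lemma Rbelow_measure_pos W : open W -> (0 < mu W)%E ->
  exists n, (0 < mu (W `&` Rbelow n.+1%:R%:E))%E.
Proof.
move=> oW muW; apply: contrapT => /forallNP null.
pose G n := if n is m.+1 then W `&` Rbelow m.+1%:R%:E else ~` Rset d0bar p1 p2.
have mG n : measurable (G n : set (BorelT K)).
  case: n => [|m] /=; first exact: measurable_RbelowC.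
  exact: open_measurable_Borel (openI oW (open_Rbelow _)).
have cover : W `<=` \bigcup_n G n.
  move=> s Ws; have [|] := pselect (Rset d0bar p1 p2 s); last by exists 0%N.
  by rewrite Rset_bigcup => -[n _ Rs]; exists n.+1.
have : (mu W <= 0)%E.
  have := measure_sigma_subadditive mu mG (open_measurable_Borel oW) cover.
  move/le_trans; apply; rewrite eseries0 // => -[|n] _ _ /=.
    exact: mu_setC_Rset0.
  by apply/eqP; rewrite eq_le measure_ge0 andbT leNgt; apply/negP/null.
by rewrite leNgt muW.
Qed.

Lemma Gset_separation_null (g : K -> R) (O U : set K) (c : R) :
  continuous g -> Gset d iota g -> (forall s, 0 <= g s <= 1) ->
  open O -> supp nu `<=` O -> (forall s, O s -> g s = 0) ->
  open U -> 0 < c -> (forall s, U s -> c <= g s) -> mu U = 0%E.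
Proof.
move=> cg Gg g01 oO suppO gO oU c0 gU; have [cK _ _ _ _] := sc.
have : (c%:E * mu U <= 0)%E.
  rewrite -(measure_setC_supp_nbhs nu O cK oO suppO).
  apply: le_trans (le_trans (mu_le_nu _ Gg) _).
    apply: measure_le_integral => //; first exact: open_measurable_Borel.
      exact: ltW.
    by move=> s; case/andP: (g01 s).
  apply: integral_le_measure => //.
    by apply: measurableC; exact: open_measurable_Borel.
  by move=> s /contrapT; exact: gO.
rewrite pmule_rle0 ?lte_fin // => mu_le0.
by apply/eqP; rewrite eq_le mu_le0 measure_ge0.
Qed.

Lemma Gset_trunc_dist (b : bool) (A : set M) (eta : R) : 0 < eta ->
  exists g : K -> R, [/\ continuous g, Gset d iota g, forall s, 0 <= g s <= 1,
    forall z, A (coord b z) -> g (iota z) = 0 &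
    forall z D, 0 < D -> (forall a, A a -> eta <= d (coord b z) a) ->
      d (sval z).1 (sval z).2 <= D -> Num.min (eta / D) 1 <= g (iota z)].
Proof.
move=> eta0; have eta_ge0 := ltW eta0; pose theta := trunc_dist d eta A.
have theta0 := trunc_dist_ge0 d dm eta A eta_ge0.
have theta_lip := trunc_dist_lipschitz1 d dm eta A eta_ge0.
have zero_lip : lipschitz1 d (fun=> 0) by move=> x u; rewrite add0r metric_ge0.
have [phi [psi [phi0 psi0 phi_lip psi_lip slot]]] : exists phi psi : M -> R,
    [/\ forall x, 0 <= phi x, forall x, 0 <= psi x, lipschitz1 d phi,
      lipschitz1 d psi &
      forall z, phi (sval z).1 + psi (sval z).2 = theta (coord b z)].
  case: b; [exists theta, (fun=> 0)|exists (fun=> 0), theta];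
    by split => // z; rewrite /coord ?addr0 ?add0r.
have [g [cg Gg gE g01]] := Gset_capped_ratio phi0 psi0 phi_lip psi_lip.
exists g; split => // [z Az|z D D0 far dD]; rewrite gE.
  by apply: capped_ratio_eq0 => //; rewrite slot; apply: trunc_dist_eq0.
by apply: capped_ratio_ge => //; rewrite slot; apply: trunc_dist_far.
Qed.

Lemma proj_supp_subset (b : bool) (q : K -> Ku) : continuous q ->
  (forall z, q (iota z) = j (coord b z)) -> q @` supp mu `<=` q @` supp nu.
Proof.
move=> cq hq _ [t mu_t <-]; apply: contrapT => nu_t.
have [cK _ _ _ _] := sc; have [cKu hKu _ _ samuel] := sa.
have [F [cF F0 F1]] : exists F : Ku -> R,
    [/\ continuous F, forall u, (q @` supp nu) u -> F u = 0 & F (q t) = 1].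
  apply: urysohn_point => //; apply: compact_closed hKu _.
  apply: continuous_compact; first exact: continuous_subspaceT.
  exact: subclosed_compact (supp_closed nu) cK (subsetT _).
have [eta eta0 Fj_uc] : exists2 eta : R, 0 < eta &
    forall x y, d x y < eta -> `|F (j x) - F (j y)| < 3^-1.
  have /(samuel (F \o j))[_ uc] : exists G : Ku -> R,
      continuous G /\ forall x, G (j x) = F (j x) by exists F.
  by apply: uc; rewrite invr_gt0.
pose A := [set x | F (j x) < 3^-1].
have [g [cg Gg g01 gA g_ge]] := Gset_trunc_dist b A eta eta0.
have cFq : continuous (F \o q) by move=> s; exact: continuous_comp (cq s) (cF _).
pose O := (F \o q) @^-1` [set r | r < 3^-1].
pose W := (F \o q) @^-1` [set r | 2 * 3^-1 < r].
have oO : open O by apply: open_comp => // s _; exact: cFq.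
have oW : open W by apply: open_comp => // s _; exact: cFq.
have Wt : W t by rewrite /W /= F1; lra.
have [n mu_n] := Rbelow_measure_pos W oW (mu_t W oW Wt).
suff : mu (W `&` Rbelow n.+1%:R%:E) = 0%E by move=> mu0; rewrite mu0 ltxx in mu_n.
pose c := Num.min (eta / (2 * n.+1%:R)) 1.
apply: (Gset_separation_null _ _ _ c cg Gg g01 oO _ _ (openI oW (open_Rbelow _))).
- by move=> s supp_s; rewrite /O /= F0 ?invr_gt0 //; exists s.
- by apply: (dense_range_closed dense_iota cg oO (@closed_eq R 0)) => z;
    rewrite /O /= hq => /gA.
- by rewrite lt_min ltr01 andbT divr_gt0.
apply: (dense_range_closed dense_iota cg (openI oW (open_Rbelow _))
  (@closed_ge R c)) => z [+ [+ +]].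
rewrite /W /= hq hp1 hp2 !hd0 !lte_fin => Wz x_lt y_lt.
apply: g_ge => [|a|].
- by rewrite mulr_gt0.
- rewrite /A /= leNgt => Aa; apply/negP => /Fj_uc; rewrite ltr_norml => /andP[_].
  lra.
- have := metric_triangle d dm (sval z).1 x0 (sval z).2.
  by rewrite (metric_sym d dm x0); lra.
Qed.

End SupportProjections.

Theorem corollary3p30 (R : realType) (M : Type) (d : M -> M -> R) (x0 : M)
  (K : ptopologicalType) (iota : Mtilde M -> K)
  (Ku : topologicalType) (j : M -> Ku)
  (p1 p2 : K -> Ku) (d0bar : Ku -> \bar R)
  (mu nu : {measure set (BorelT K) -> \bar R}) :
  is_metric d -> metric_complete d ->
  (exists a b c : M, [/\ a <> b, a <> c & b <> c]) ->
  is_stone_cech d iota -> is_samuel d j ->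
  continuous p1 -> (forall z : Mtilde M, p1 (iota z) = j (sval z).1) ->
  continuous p2 -> (forall z : Mtilde M, p2 (iota z) = j (sval z).2) ->
  continuous d0bar -> (forall x : M, d0bar (j x) = (d x x0)%:E) ->
  radon mu -> radon nu ->
  Gle d iota mu nu ->
  nu (~` Rset d0bar p1 p2) = 0%E ->
  p1 @` supp mu `<=` p1 @` supp nu /\ p2 @` supp mu `<=` p2 @` supp nu.
Proof.
move=> dm _ _ sc sa cp1 hp1 cp2 hp2 cd0 hd0 _ [nu_fin _] mu_le_nu nu_R.
have proj_subset := proj_supp_subset dm sc sa cp1 hp1 cp2 hp2 cd0 hd0 nu_fin
  mu_le_nu nu_R.
by split; [exact: proj_subset true p1 cp1 hp1|exact: proj_subset false p2 cp2 hp2].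
Qed.
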